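(* For $k=1,\dots,s-1$, assume the following quantity is defined (denominator nonzero): $$r_k:=\frac{\alpha_k-\beta_k}{h_{k+1}\beta_k-h_{k-1}\alpha_k}.$$ Set $r_0:=P_{\max}$ and $r_s:=0$, and suppose $$0=r_s<r_{s-1}<\cdots<r_1<r_0=P_{\max}.$$ Then the KKT system described in the context has a unique solution. In that solution $I_k=r_k$ for all $k\in\{1,\dots,s-1\}$ and $\lambda_k=0$ for all $k$. Moreover, the optimal power allocation of problem (P) is $I^{**}_k=r_k$ for all $k\in\{1,\dots,s-1\}$.
   Context: Parameters: - $s\ge 2$, $P_{\max}>0$, and positive reals $h_0<h_1<\cdots<h_s$. - Probabilities $\delta_0,\dots,\delta_s$ summing to $1$. - $\theta_k:=\sum_{j=0}^{k-1}\delta_j$ and $\Delta_k:=\theta_k(1-\theta_k)$ for $k=1,\dots,s$. - $\alpha_k:=(h_{k+1}-h_k)\Delta_{k+1}$ and $\beta_k:=(h_k-h_{k-1})\Delta_k$ for $k=1,\dots,s-1$. Problem (P). The variables are $I_1,\dots,I_{s-1}$, with the conventions $I_0:=P_{\max}$ and $I_s:=0$. Maximize $$f(I)=\sum_{i=1}^s\Delta_i\,\frac L2\log\Big(\frac{1+h_iI_{i-1}}{1+h_iI_i}\cdot\frac{1+h_{i-1}I_i}{1+h_{i-1}I_{i-1}}\Big)$$ subject to $I_k\le I_{k-1}$ for all $k=1,\dots,s$. This is the power-allocation problem with $I_k=\sum_{j>k}P_j$. KKT system. Define the Lagrangian $$\mathcal L(I,\lambda)=-f(I)+\sum_{i=1}^s\lambda_i(I_i-I_{i-1}).$$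 The system asks for $(I_1,\dots,I_{s-1},\lambda_1,\dots,\lambda_s)$ such that: - $\partial\mathcal L/\partial I_k=0$ for $k=1,\dots,s-1$, - $\lambda_k(I_k-I_{k-1})=0$, $I_k\le I_{k-1}$ and $\lambda_k\ge0$ for $k=1,\dots,s$. *)

From Stdlib Require Import Reals Lra Lia.
Open Scope R_scope.

Fixpoint rsum (g : nat -> R) (n : nat) : R :=
  match n with O => 0 | S m => rsum g m + g m end.

Definition theta (delta : nat -> R) (k : nat) : R := rsum delta k.
Definition Delta (delta : nat -> R) (k : nat) : R :=
  theta delta k * (1 - theta delta k).

Definition alpha (h delta : nat -> R) (k : nat) : R :=
  (h (S k) - h k) * Delta delta (S k).
Definition beta (h delta : nat -> R) (k : nat) : R :=
  (h k - h (pred k)) * Delta delta k.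

Definition rk (h delta : nat -> R) (k : nat) : R :=
  (alpha h delta k - beta h delta k) /
  (h (S k) * beta h delta k - h (pred k) * alpha h delta k).

Definition Iext (s : nat) (Pmax : R) (I : nat -> R) (k : nat) : R :=
  if Nat.eqb k 0 then Pmax else if Nat.eqb k s then 0 else I k.

Definition fobj (s : nat) (Pmax L : R) (h delta : nat -> R) (I : nat -> R) : R :=
  rsum (fun j =>
    let i := S j in
    Delta delta i * (L / 2) *
      ln ((1 + h i * Iext s Pmax I (pred i)) / (1 + h i * Iext s Pmax I i) *
          ((1 + h (pred i) * Iext s Pmax I i) /
           (1 + h (pred i) * Iext s Pmax I (pred i))))) s.

Definition Lagr (s : nat) (Pmax L : R) (h delta : nat -> R)
  (I lam : nat -> R) : R :=
  - fobj s Pmax L h delta I +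
  rsum (fun j => lam (S j) * (Iext s Pmax I (S j) - Iext s Pmax I j)) s.

Definition upd (I : nat -> R) (k : nat) (x : R) : nat -> R :=
  fun j => if Nat.eqb j k then x else I j.

Definition feasible (s : nat) (Pmax : R) (I : nat -> R) : Prop :=
  forall k, (1 <= k <= s)%nat -> Iext s Pmax I k <= Iext s Pmax I (pred k).

Definition KKT (s : nat) (Pmax L : R) (h delta : nat -> R)
  (I lam : nat -> R) : Prop :=
  (forall k, (1 <= k <= s - 1)%nat ->
     derivable_pt_lim (fun x => Lagr s Pmax L h delta (upd I k x) lam) (I k) 0)
  /\ (forall k, (1 <= k <= s)%nat ->
        lam k * (Iext s Pmax I k - Iext s Pmax I (pred k)) = 0
        /\ Iext s Pmax I k <= Iext s Pmax I (pred k)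
        /\ 0 <= lam k).

From Pilot Require Import Defs.
From Stdlib Require Import Reals Lra Lia.
Open Scope R_scope.

(* Summation by parts makes f separable: f(I) = const + sum_k G_k(I_k) with
   G_k(y) = (L/2) (Delta_(k+1) ln((1+h_(k+1) y)/(1+h_k y)) - Delta_k ln((1+h_k y)/(1+h_(k-1) y))).
   Over a common denominator G_k'(y) is a positive multiple of r_k - y (the
   denominator of r_k is positive since r_k > 0 and alpha_k >= 0), so G_k is
   unimodal with its maximum at r_k, and the feasible point r is optimal.
   In the Lagrangian, I_k only enters through -G_k(I_k) + (lambda_k - lambda_(k+1)) I_k,
   so stationarity reads lambda_k - lambda_(k+1) = c_k (r_k - I_k) with c_k > 0.
   If lambda_k > 0 then I_k = I_(k-1), and as r_k < r_(k-1) either I_k > r_k or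
   I_(k-1) < r_(k-1); stationarity then propagates the active constraint forwards
   (resp. backwards) until it contradicts I_s = r_s = 0 (resp. I_0 = r_0 = P_max).
   Hence lambda = 0, and then I = r. *)

Lemma rsum_ext (f g : nat -> R) n :
  (forall j, (j < n)%nat -> f j = g j) -> rsum f n = rsum g n.
Proof.
  induction n as [|n IH]; intros Hfg; simpl; [reflexivity|].
  rewrite IH, Hfg; [reflexivity | lia | intros; apply Hfg; lia].
Qed.

Lemma rsum_le (f g : nat -> R) n :
  (forall j, (j < n)%nat -> f j <= g j) -> rsum f n <= rsum g n.
Proof.
  induction n as [|n IH]; intros Hfg; simpl; [lra|].
  assert (rsum f n <= rsum g n) by (apply IH; intros; apply Hfg; lia).
  assert (f n <= g n) by (apply Hfg; lia).
  lra.
Qed.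

Lemma rsum_nonneg_le (d : nat -> R) m n :
  (forall j, (j < n)%nat -> 0 <= d j) -> (m <= n)%nat ->
  0 <= rsum d m <= rsum d n.
Proof.
  intros Hd Hmn; induction Hmn as [|n Hmn IH]; simpl.
  - induction m as [|m IHm]; simpl; [lra|].
    assert (0 <= d m) by (apply Hd; lia).
    assert (0 <= rsum d m) by (apply IHm; intros; apply Hd; lia).
    lra.
  - assert (0 <= rsum d m <= rsum d n) by (apply IH; intros; apply Hd; lia).
    assert (0 <= d n) by (apply Hd; lia).
    lra.
Qed.

Lemma rsum_sub (f g : nat -> R) n :
  rsum (fun j => f j - g j) n = rsum f n - rsum g n.
Proof. induction n as [|n IH]; simpl; [ring|]. rewrite IH. ring. Qed.

Lemma rsum_update (f g : nat -> R) n k :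
  (k < n)%nat -> (forall j, (j < n)%nat -> j <> k -> f j = g j) ->
  rsum f n = rsum g n - g k + f k.
Proof.
  induction n as [|n IH]; intros Hk Hfg; [lia|]; simpl.
  destruct (Nat.eq_dec k n) as [->|Hkn].
  - rewrite (rsum_ext f g) by (intros; apply Hfg; lia). ring.
  - rewrite IH, (Hfg n); [ring | lia | lia | lia | intros; apply Hfg; lia].
Qed.

Lemma rsum_abel (A : nat -> R -> R) (X : nat -> R) n : (1 <= n)%nat ->
  rsum (fun j => A j (X j) - A j (X (S j))) n =
  A 0%nat (X 0%nat) - A (n - 1)%nat (X n) +
  rsum (fun j => A (S j) (X (S j)) - A j (X (S j))) (n - 1).
Proof.
  intros Hn. destruct n as [|p]; [lia|]. replace (S p - 1)%nat with p by lia.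
  induction p as [|p IH]; [simpl; ring|].
  cbn [rsum] in *. rewrite IH by lia. ring.
Qed.

Lemma antitone_le (X : nat -> R) n :
  (forall k, (k < n)%nat -> X (S k) <= X k) ->
  forall i j, (i <= j <= n)%nat -> X j <= X i.
Proof.
  intros HX i j Hij.
  induction j as [|j IH].
  - replace i with 0%nat by lia. lra.
  - destruct (Nat.eq_dec i (S j)) as [->|Hi]; [lra|].
    assert (X j <= X i) by (apply IH; lia).
    assert (X (S j) <= X j) by (apply HX; lia).
    lra.
Qed.

(* The j-th summand of f is [layer j I_j - layer j I_(j+1)]. *)
Definition layer (h delta : nat -> R) (L : R) (j : nat) (y : R) : R :=
  Defs.Delta delta (S j) * (L / 2) * (ln (1 + h (S j) * y) - ln (1 + h j * y)).

Definition dlayer (h delta : nat -> R) (L : R) (j : nat) (y : R) : R :=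
  Defs.Delta delta (S j) * (L / 2) * (h (S j) / (1 + h (S j) * y) - h j / (1 + h j * y)).

Definition gain (h delta : nat -> R) (L : R) (k : nat) (y : R) : R :=
  layer h delta L k y - layer h delta L (pred k) y.

Definition dgain (h delta : nat -> R) (L : R) (k : nat) (y : R) : R :=
  dlayer h delta L k y - dlayer h delta L (pred k) y.

Definition rk_den (h delta : nat -> R) (k : nat) : R :=
  h (S k) * beta h delta k - h (pred k) * alpha h delta k.

Definition dgain_coef (h delta : nat -> R) (L : R) (k : nat) (y : R) : R :=
  L / 2 * rk_den h delta k / ((1 + h (pred k) * y) * (1 + h k * y) * (1 + h (S k) * y)).

Lemma layer_0 h delta L j : layer h delta L j 0 = 0.
Proof. unfold layer. rewrite !Rmult_0_r, !Rplus_0_r, ln_1. ring. Qed.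

Lemma derivable_pt_lim_ln_affine (c x : R) :
  0 < 1 + c * x -> derivable_pt_lim (fun y => ln (1 + c * y)) x (c / (1 + c * x)).
Proof.
  intros Hx.
  assert (Haff : derivable_pt_lim (fun y => 1 + c * y) x c).
  { apply (derivable_pt_lim_ext (fct_cte 1 + mult_real_fct c id)%F);
      [reflexivity|].
    replace c with (0 + c * 1) at 2 by ring.
    apply derivable_pt_lim_plus; [apply derivable_pt_lim_const|].
    apply derivable_pt_lim_scal, derivable_pt_lim_id. }
  replace (c / (1 + c * x)) with (/ (1 + c * x) * c) by (field; lra).
  exact (derivable_pt_lim_comp _ ln x c _ Haff (derivable_pt_lim_ln _ Hx)).
Qed.

Lemma layer_deriv h delta L j y :
  0 < 1 + h (S j) * y -> 0 < 1 + h j * y ->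
  derivable_pt_lim (layer h delta L j) y (dlayer h delta L j y).
Proof.
  intros H1 H0.
  apply (derivable_pt_lim_scal (fun y => ln (1 + h (S j) * y) - ln (1 + h j * y))).
  apply (derivable_pt_lim_minus (fun y => ln (1 + h (S j) * y)) (fun y => ln (1 + h j * y)));
    apply derivable_pt_lim_ln_affine; assumption.
Qed.

Lemma gain_deriv h delta L k y :
  0 < 1 + h (pred k) * y -> 0 < 1 + h k * y -> 0 < 1 + h (S k) * y ->
  derivable_pt_lim (gain h delta L k) y (dgain h delta L k y).
Proof.
  intros Hm H0 Hp.
  apply (derivable_pt_lim_minus (layer h delta L k) (layer h delta L (pred k)));
    apply layer_deriv; try assumption.
  destruct k; assumption.
Qed.

(* Bringing the two layer derivatives to a common denominator gives
   [alpha_k (1 + h_(k-1) y) - beta_k (1 + h_(k+1) y)] in the numerator. *)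
Lemma dgain_eq h delta L k y :
  (0 < k)%nat -> rk_den h delta k <> 0 ->
  0 < 1 + h (pred k) * y -> 0 < 1 + h k * y -> 0 < 1 + h (S k) * y ->
  dgain h delta L k y = dgain_coef h delta L k y * (rk h delta k - y).
Proof.
  intros Hk HD Hm H0 Hp. destruct k as [|k]; [lia|].
  unfold dgain, dgain_coef, rk_den in *. unfold dlayer, rk, alpha, beta in *. cbn [pred] in *.
  field. repeat split; lra.
Qed.

Lemma rk_den_pos (a b hm hp : R) :
  0 <= a -> 0 < hm <= hp -> hp * b - hm * a <> 0 ->
  0 < (a - b) / (hp * b - hm * a) -> 0 < hp * b - hm * a.
Proof.
  intros Ha Hh HD Hr.
  destruct (Rtotal_order (hp * b - hm * a) 0) as [Hneg|[Hz|Hpos]]; [|contradiction|exact Hpos].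
  assert (Hab : a - b < 0).
  { replace (a - b) with ((a - b) / (hp * b - hm * a) * (hp * b - hm * a)) by (field; exact HD).
    nra. }
  nra.
Qed.

Lemma unimodal_max (g g' : R -> R) (r y : R) :
  0 <= r -> 0 <= y ->
  (forall c, 0 <= c -> derivable_pt_lim g c (g' c)) ->
  (forall c, 0 <= c -> c < r -> 0 < g' c) ->
  (forall c, r < c -> g' c < 0) ->
  g y <= g r.
Proof.
  intros Hr Hy Hd Hinc Hdec.
  destruct (Rtotal_order y r) as [Hlt|[->|Hgt]]; [|lra|].
  - destruct (MVT_cor2 g g' y r Hlt) as [c [Hc Hcy]]; [intros; apply Hd; lra|].
    assert (0 < g' c) by (apply Hinc; lra). nra.
  - destruct (MVT_cor2 g g' r y Hgt) as [c [Hc Hcy]]; [intros; apply Hd; lra|].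
    assert (g' c < 0) by (apply Hdec; lra). nra.
Qed.

Section Separable.

Variables (s : nat) (Pmax L : R) (h delta : nat -> R).
Hypothesis Hs : (1 <= s)%nat.

Definition log_args_pos (I : nat -> R) : Prop :=
  forall j m, (j <= s)%nat -> (m <= s)%nat -> 0 < 1 + h j * Iext s Pmax I m.

Definition coord_lagr (lam : nat -> R) (k : nat) (y : R) : R :=
  - gain h delta L k y + (lam k - lam (S k)) * y.

Lemma Iext_0 I : Iext s Pmax I 0 = Pmax.
Proof. reflexivity. Qed.

Lemma Iext_last I : Iext s Pmax I s = 0.
Proof. unfold Iext. destruct (Nat.eqb_spec s 0); [lia|]. now rewrite Nat.eqb_refl. Qed.

Lemma Iext_inner I k : (1 <= k <= s - 1)%nat -> Iext s Pmax I k = I k.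
Proof.
  intros Hk. unfold Iext.
  destruct (Nat.eqb_spec k 0), (Nat.eqb_spec k s); [lia..|reflexivity].
Qed.

Lemma Iext_upd I k x m : (1 <= k <= s - 1)%nat ->
  Iext s Pmax (upd I k x) m = if Nat.eqb m k then x else Iext s Pmax I m.
Proof.
  intros Hk. unfold Iext, upd.
  destruct (Nat.eqb_spec m 0), (Nat.eqb_spec m s), (Nat.eqb_spec m k); lia || reflexivity.
Qed.

Lemma log_args_pos_upd I k x : (1 <= k <= s - 1)%nat -> log_args_pos I ->
  (forall j, (j <= s)%nat -> 0 < 1 + h j * x) -> log_args_pos (upd I k x).
Proof.
  intros Hk HI Hx j m Hj Hm. rewrite Iext_upd by exact Hk.
  destruct (Nat.eqb m k); auto.
Qed.

Lemma fobj_separable I : log_args_pos I ->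
  fobj s Pmax L h delta I =
  layer h delta L 0 Pmax + rsum (fun j => gain h delta L (S j) (I (S j))) (s - 1).
Proof.
  intros HI. unfold fobj.
  rewrite (rsum_ext _ (fun j => layer h delta L j (Iext s Pmax I j)
                                 - layer h delta L j (Iext s Pmax I (S j)))).
  - rewrite rsum_abel by exact Hs. rewrite Iext_0, Iext_last, layer_0, Rminus_0_r.
    f_equal. apply rsum_ext. intros j Hj. unfold gain. cbn [pred].
    rewrite Iext_inner by lia. reflexivity.
  - intros j Hj. cbv zeta. cbn [pred]. unfold layer.
    assert (H0 := HI (S j) j ltac:(lia) ltac:(lia)).
    assert (H1 := HI (S j) (S j) ltac:(lia) ltac:(lia)).
    assert (H2 := HI j (S j) ltac:(lia) ltac:(lia)).
    assert (H3 := HI j j ltac:(lia) ltac:(lia)).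
    unfold Rdiv. rewrite !ln_mult, !ln_Rinv; try ring;
      auto using Rinv_0_lt_compat, Rmult_lt_0_compat.
Qed.

Lemma penalty_separable I (lam : nat -> R) :
  rsum (fun j => lam (S j) * (Iext s Pmax I (S j) - Iext s Pmax I j)) s =
  - lam 1%nat * Pmax + rsum (fun j => (lam (S j) - lam (S (S j))) * I (S j)) (s - 1).
Proof.
  rewrite (rsum_ext _ (fun j => - lam (S j) * Iext s Pmax I j
                                 - - lam (S j) * Iext s Pmax I (S j)))
    by (intros; ring).
  rewrite (rsum_abel (fun j y => - lam (S j) * y)) by exact Hs. rewrite Iext_0, Iext_last.
  rewrite (rsum_ext _ (fun j => (lam (S j) - lam (S (S j))) * I (S j))).
  - ring.
  - intros j Hj. rewrite Iext_inner by lia. ring.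
Qed.

Lemma Lagr_separable I lam : log_args_pos I ->
  Lagr s Pmax L h delta I lam =
  - layer h delta L 0 Pmax - lam 1%nat * Pmax
  + rsum (fun j => coord_lagr lam (S j) (I (S j))) (s - 1).
Proof.
  intros HI. unfold Lagr. rewrite fobj_separable, penalty_separable by exact HI.
  unfold coord_lagr.
  rewrite (rsum_ext (fun j => - gain h delta L (S j) (I (S j))
                               + (lam (S j) - lam (S (S j))) * I (S j))
             (fun j => (lam (S j) - lam (S (S j))) * I (S j)
                       - gain h delta L (S j) (I (S j)))) by (intros; ring).
  rewrite rsum_sub. ring.
Qed.

Lemma Lagr_upd I lam k x : (1 <= k <= s - 1)%nat ->
  log_args_pos I -> (forall j, (j <= s)%nat -> 0 < 1 + h j * x) ->
  Lagr s Pmax L h delta (upd I k x) lam =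
  Lagr s Pmax L h delta I lam - coord_lagr lam k (I k) + coord_lagr lam k x.
Proof.
  intros Hk HI Hx.
  rewrite !Lagr_separable by auto using log_args_pos_upd.
  rewrite (rsum_update _ (fun j => coord_lagr lam (S j) (I (S j))) (s - 1) (pred k)).
  - replace (S (pred k)) with k by lia. unfold upd. rewrite Nat.eqb_refl. ring.
  - lia.
  - intros j Hj Hjk. unfold upd. destruct (Nat.eqb_spec (S j) k); [lia|reflexivity].
Qed.

End Separable.

Section IncreasingGains.

Variables (s : nat) (Pmax L : R) (h delta : nat -> R).
Hypothesis Hs : (1 <= s)%nat.
Hypothesis HL : 0 < L.
Hypothesis Hh0 : 0 < h 0%nat.
Hypothesis Hinc : forall k, (k < s)%nat -> h k < h (S k).

Lemma h_pos j : (j <= s)%nat -> 0 < h j.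
Proof.
  induction j as [|j IH]; intros Hj; [exact Hh0|].
  assert (h j < h (S j)) by (apply Hinc; lia).
  assert (0 < h j) by (apply IH; lia).
  lra.
Qed.

Lemma h_le_last j : (j <= s)%nat -> h j <= h s.
Proof.
  intros Hj.
  assert (Hanti := antitone_le (fun m => - h m) s
                     (fun k Hk => Ropp_le_contravar _ _ (Rlt_le _ _ (Hinc k Hk)))).
  specialize (Hanti j s ltac:(lia)). cbv beta in Hanti. lra.
Qed.

Lemma affine_pos j y : (j <= s)%nat -> 0 <= y -> 0 < 1 + h j * y.
Proof. intros Hj Hy. assert (0 < h j) by (apply h_pos; exact Hj). nra. Qed.

Lemma log_args_pos_of_nonneg I :
  (forall m, (m <= s)%nat -> 0 <= Iext s Pmax I m) -> log_args_pos s Pmax h I.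
Proof. intros HI j m Hj Hm. apply affine_pos; auto. Qed.

Lemma Lagr_coord_deriv I lam k : (1 <= k <= s - 1)%nat ->
  (forall m, (m <= s)%nat -> 0 <= Iext s Pmax I m) ->
  derivable_pt_lim (fun x => Lagr s Pmax L h delta (upd I k x) lam) (I k)
    (- dgain h delta L k (I k) + (lam k - lam (S k))).
Proof.
  intros Hk HI.
  assert (HIk : 0 <= I k) by (rewrite <- (Iext_inner s Pmax) by lia; apply HI; lia).
  assert (Hhs : 0 < h s) by (apply h_pos; lia).
  assert (Hnear : forall x, - / h s < x -> forall j, (j <= s)%nat -> 0 < 1 + h j * x).
  { intros x Hx j Hj.
    destruct (Rle_or_lt 0 x); [apply affine_pos; auto|].
    assert (h j <= h s) by (apply h_le_last; exact Hj).
    assert (h s * x > -1).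
    { apply (Rmult_lt_compat_l (h s)) in Hx; [|exact Hhs].
      rewrite Ropp_mult_distr_r_reverse, Rinv_r in Hx; lra. }
    nra. }
  apply (derivable_pt_lim_locally_ext
           (fun x => Lagr s Pmax L h delta I lam - coord_lagr L h delta lam k (I k)
                     + coord_lagr L h delta lam k x) _ _ (- / h s) (I k + 1)).
  - assert (0 < / h s) by (apply Rinv_0_lt_compat; exact Hhs). lra.
  - intros z Hz. symmetry. apply Lagr_upd; auto using log_args_pos_of_nonneg.
    apply Hnear. lra.
  - replace (- dgain h delta L k (I k) + (lam k - lam (S k)))
      with (0 + (- dgain h delta L k (I k) + (lam k - lam (S k)) * 1)) by ring.
    apply (derivable_pt_lim_plus (fct_cte _)); [apply derivable_pt_lim_const|].
    apply (derivable_pt_lim_plus (- gain h delta L k)%F (mult_real_fct _ id)).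
    + apply derivable_pt_lim_opp, gain_deriv; apply affine_pos; lia || exact HIk.
    + apply derivable_pt_lim_scal, derivable_pt_lim_id.
Qed.

Lemma dgain_coef_pos k y : (1 <= k <= s - 1)%nat -> 0 < rk_den h delta k -> 0 <= y ->
  0 < dgain_coef h delta L k y.
Proof.
  intros Hk HD Hy.
  assert (Hm := affine_pos (pred k) y ltac:(lia) Hy).
  assert (H0 := affine_pos k y ltac:(lia) Hy).
  assert (Hp := affine_pos (S k) y ltac:(lia) Hy).
  apply Rdiv_lt_0_compat; [nra|].
  repeat apply Rmult_lt_0_compat; assumption.
Qed.

Lemma dgain_eq_pos k y : (1 <= k <= s - 1)%nat -> 0 < rk_den h delta k -> 0 <= y ->
  dgain h delta L k y = dgain_coef h delta L k y * (rk h delta k - y).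
Proof.
  intros Hk HD Hy. apply dgain_eq; try lia; try lra; apply affine_pos; lia || exact Hy.
Qed.

Lemma gain_le_at_rk k y : (1 <= k <= s - 1)%nat ->
  0 < rk_den h delta k -> 0 <= rk h delta k -> 0 <= y ->
  gain h delta L k y <= gain h delta L k (rk h delta k).
Proof.
  intros Hk HD Hr Hy.
  apply (unimodal_max _ (dgain h delta L k)); auto.
  - intros c Hc. apply gain_deriv; apply affine_pos; lia || exact Hc.
  - intros c Hc Hcr. rewrite dgain_eq_pos by auto.
    assert (0 < dgain_coef h delta L k c) by (apply dgain_coef_pos; auto). nra.
  - intros c Hc. rewrite dgain_eq_pos by (auto; lra).
    assert (0 < dgain_coef h delta L k c) by (apply dgain_coef_pos; auto; lra). nra.
Qed.

End IncreasingGains.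

Section MultiplierChain.

Variables (s : nat) (X r lam c : nat -> R).
Hypothesis Hstart : X 0%nat = r 0%nat.
Hypothesis Hend : X s = r s.
Hypothesis Hr : forall k, (k < s)%nat -> r (S k) < r k.
Hypothesis Hslack : forall k, (1 <= k <= s)%nat -> 0 < lam k -> X k = X (pred k).
Hypothesis Hc : forall k, (1 <= k <= s - 1)%nat -> 0 < c k.
Hypothesis Hstat : forall k, (1 <= k <= s - 1)%nat -> lam k - lam (S k) = c k * (r k - X k).

Lemma active_above_absurd d k : (k + d = s)%nat -> (1 <= k)%nat ->
  0 < lam k -> r k < X k -> False.
Proof.
  revert k. induction d as [|d IH]; intros k Hkd Hk Hl Hgt.
  - replace k with s in Hgt by lia. lra.
  - assert (Hck := Hc k ltac:(lia)). assert (Hsk := Hstat k ltac:(lia)).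
    assert (Hl' : 0 < lam (S k)) by nra.
    assert (Heq := Hslack (S k) ltac:(lia) Hl'). cbn [pred] in Heq.
    assert (r (S k) < r k) by (apply Hr; lia).
    apply (IH (S k)); [lia|lia|exact Hl'|lra].
Qed.

Lemma active_below_absurd k : (1 <= k <= s)%nat ->
  0 < lam k -> X (pred k) < r (pred k) -> False.
Proof.
  induction k as [|k IH]; intros Hk Hl Hlt; [lia|]. cbn [pred] in Hlt.
  destruct k as [|k]; [lra|].
  assert (Hck := Hc (S k) ltac:(lia)). assert (Hsk := Hstat (S k) ltac:(lia)).
  assert (Hl' : 0 < lam (S k)) by nra.
  assert (Heq := Hslack (S k) ltac:(lia) Hl'). cbn [pred] in Heq.
  assert (r (S k) < r k) by (apply Hr; lia).
  apply (IH ltac:(lia) Hl'). cbn [pred]. lra.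
Qed.

Lemma multipliers_nonpos k : (1 <= k <= s)%nat -> lam k <= 0.
Proof.
  intros Hk. destruct (Rle_or_lt (lam k) 0) as [Hle|Hl]; [exact Hle|exfalso].
  assert (Heq := Hslack k Hk Hl).
  assert (r k < r (pred k)) by (replace k with (S (pred k)) at 1 by lia; apply Hr; lia).
  destruct (Rlt_or_le (r k) (X k)).
  - apply (active_above_absurd (s - k) k); lia || assumption.
  - apply (active_below_absurd k); auto. lra.
Qed.

End MultiplierChain.

Lemma Delta_nonneg (delta : nat -> R) n k :
  (forall j, (j <= n)%nat -> 0 <= delta j) -> rsum delta (S n) = 1 ->
  (k <= S n)%nat -> 0 <= Defs.Delta delta k.
Proof.
  intros Hd H1 Hk. unfold Defs.Delta, theta.
  assert (0 <= rsum delta k <= rsum delta (S n))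
    by (apply rsum_nonneg_le; [intros; apply Hd; lia | exact Hk]).
  nra.
Qed.

Lemma feasible_bounds s Pmax I : (1 <= s)%nat -> feasible s Pmax I ->
  forall m, (m <= s)%nat -> 0 <= Iext s Pmax I m <= Pmax.
Proof.
  intros Hs HI m Hm.
  assert (Hanti := antitone_le (Iext s Pmax I) s (fun k Hk => HI (S k) ltac:(lia))).
  rewrite <- (Iext_last s Pmax Hs I), <- (Iext_0 s Pmax I).
  split; apply Hanti; lia.
Qed.

Section PowerAllocation.

Variables (s : nat) (Pmax L : R) (h delta : nat -> R).
Hypothesis Hs : (1 <= s)%nat.
Hypothesis HL : 0 < L.
Hypothesis Hh0 : 0 < h 0%nat.
Hypothesis Hinc : forall k, (k < s)%nat -> h k < h (S k).
Hypothesis Hdelta : forall j, (j <= s)%nat -> 0 <= delta j.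
Hypothesis Hsum : rsum delta (S s) = 1.
Hypothesis Hden : forall k, (1 <= k <= s - 1)%nat -> rk_den h delta k <> 0.
Hypothesis Hr : forall k, (k < s)%nat ->
  Iext s Pmax (rk h delta) (S k) < Iext s Pmax (rk h delta) k.

Lemma rk_feasible : feasible s Pmax (rk h delta).
Proof. intros k Hk. replace k with (S (pred k)) by lia. apply Rlt_le, Hr. lia. Qed.

Lemma feasible_nonneg I : feasible s Pmax I ->
  forall m, (m <= s)%nat -> 0 <= Iext s Pmax I m.
Proof. intros HI m Hm. apply feasible_bounds; assumption. Qed.

Lemma feasible_inner_nonneg I k : feasible s Pmax I -> (1 <= k <= s - 1)%nat -> 0 <= I k.
Proof.
  intros HI Hk. rewrite <- (Iext_inner s Pmax Hs I k Hk).
  apply feasible_nonneg; [exact HI | lia].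
Qed.

Lemma rk_pos k : (1 <= k <= s - 1)%nat -> 0 < rk h delta k.
Proof.
  intros Hk. rewrite <- (Iext_inner s Pmax Hs (rk h delta) k Hk).
  assert (Hnext := feasible_bounds s Pmax _ Hs rk_feasible (S k) ltac:(lia)).
  assert (Hlt := Hr k ltac:(lia)). lra.
Qed.

Lemma rk_den_inner_pos k : (1 <= k <= s - 1)%nat -> 0 < rk_den h delta k.
Proof.
  intros Hk.
  apply (rk_den_pos _ (beta h delta k)); [| | apply Hden; lia | apply rk_pos; lia].
  - unfold alpha. assert (h k < h (S k)) by (apply Hinc; lia).
    assert (0 <= Defs.Delta delta (S k)) by (apply (Delta_nonneg delta s); auto; lia).
    nra.
  - assert (h (pred k) < h k) by (replace k with (S (pred k)) at 2 by lia; apply Hinc; lia).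
    assert (h k < h (S k)) by (apply Hinc; lia).
    split; [apply (h_pos s h Hs Hh0 Hinc); lia | lra].
Qed.

Lemma KKT_stationary I lam k : KKT s Pmax L h delta I lam -> (1 <= k <= s - 1)%nat ->
  lam k - lam (S k) = dgain_coef h delta L k (I k) * (rk h delta k - I k).
Proof.
  intros [Hstat Hcs] Hk.
  assert (HI : feasible s Pmax I) by (intros j Hj; apply Hcs; exact Hj).
  rewrite <- (dgain_eq_pos s L h delta Hs Hh0 Hinc)
    by auto using rk_den_inner_pos, feasible_inner_nonneg.
  assert (Hderiv := Lagr_coord_deriv s Pmax L h delta Hs Hh0 Hinc I lam k Hk
                      (feasible_nonneg I HI)).
  assert (Hu := uniqueness_limite _ _ _ _ (Hstat k Hk) Hderiv).
  lra.
Qed.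

Lemma rk_KKT : KKT s Pmax L h delta (rk h delta) (fun _ => 0).
Proof.
  split.
  - intros k Hk.
    assert (Hd := Lagr_coord_deriv s Pmax L h delta Hs Hh0 Hinc (rk h delta) (fun _ => 0)
                    k Hk (feasible_nonneg _ rk_feasible)).
    rewrite (dgain_eq_pos s L h delta Hs Hh0 Hinc) in Hd
      by auto using rk_den_inner_pos, Rlt_le, rk_pos.
    replace (- (dgain_coef h delta L k (rk h delta k) * (rk h delta k - rk h delta k))
             + (0 - 0)) with 0 in Hd by ring.
    exact Hd.
  - intros k Hk. split; [ring | split; [apply rk_feasible; exact Hk | lra]].
Qed.

Lemma KKT_unique I lam : KKT s Pmax L h delta I lam ->
  (forall k, (1 <= k <= s - 1)%nat -> I k = rk h delta k)
  /\ (forall k, (1 <= k <= s)%nat -> lam k = 0).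
Proof.
  intros HKKT. pose proof HKKT as [_ Hcs].
  assert (HI : feasible s Pmax I) by (intros k Hk; apply Hcs; exact Hk).
  set (c k := dgain_coef h delta L k (I k)).
  assert (Hc : forall k, (1 <= k <= s - 1)%nat -> 0 < c k)
    by (intros k Hk; apply (dgain_coef_pos s L h delta Hs HL Hh0 Hinc);
        auto using rk_den_inner_pos, feasible_inner_nonneg).
  assert (Hmult : forall k, (1 <= k <= s - 1)%nat ->
            lam k - lam (S k) = c k * (Iext s Pmax (rk h delta) k - Iext s Pmax I k)).
  { intros k Hk. rewrite !(Iext_inner s Pmax Hs) by exact Hk.
    apply KKT_stationary; assumption. }
  assert (Hlam : forall k, (1 <= k <= s)%nat -> lam k = 0).
  { intros k Hk. apply Rle_antisym; [|apply Hcs; exact Hk].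
    apply (multipliers_nonpos s (Iext s Pmax I) (Iext s Pmax (rk h delta)) lam c);
      [reflexivity | now rewrite !(Iext_last s Pmax Hs) | exact Hr | | exact Hc
      | exact Hmult | exact Hk].
    intros j Hj Hl. destruct (Hcs j Hj) as [Hzero _].
    apply Rmult_integral in Hzero. lra. }
  split; [|exact Hlam].
  intros k Hk. specialize (Hmult k Hk). rewrite !Hlam in Hmult by lia.
  rewrite !(Iext_inner s Pmax Hs) in Hmult by exact Hk.
  assert (0 < c k) by auto. nra.
Qed.

Lemma rk_optimal I : feasible s Pmax I ->
  fobj s Pmax L h delta I <= fobj s Pmax L h delta (rk h delta).
Proof.
  intros HI.
  rewrite !(fobj_separable s Pmax L h delta Hs)
    by (apply (log_args_pos_of_nonneg s Pmax h Hs Hh0 Hinc), feasible_nonneg;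
        auto using rk_feasible).
  apply Rplus_le_compat_l, rsum_le. intros j Hj.
  apply (gain_le_at_rk s L h delta Hs HL Hh0 Hinc);
    auto using rk_den_inner_pos, Rlt_le, rk_pos, feasible_inner_nonneg with arith.
Qed.

End PowerAllocation.

Theorem lemma1 (s : nat) (Pmax L : R) (h delta : nat -> R) :
  (2 <= s)%nat -> 0 < Pmax -> 0 < L ->
  0 < h 0%nat -> (forall k, (k < s)%nat -> h k < h (S k)) ->
  (forall j, (j <= s)%nat -> 0 <= delta j) ->
  rsum delta (S s) = 1 ->
  (forall k, (1 <= k <= s - 1)%nat ->
     h (S k) * beta h delta k - h (pred k) * alpha h delta k <> 0) ->
  (forall k, (k < s)%nat ->
     Iext s Pmax (rk h delta) (S k) < Iext s Pmax (rk h delta) k) ->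
  KKT s Pmax L h delta (rk h delta) (fun _ => 0)
  /\ (forall I lam, KKT s Pmax L h delta I lam ->
        (forall k, (1 <= k <= s - 1)%nat -> I k = rk h delta k)
        /\ (forall k, (1 <= k <= s)%nat -> lam k = 0))
  /\ feasible s Pmax (rk h delta)
  /\ (forall I, feasible s Pmax I ->
        fobj s Pmax L h delta I <= fobj s Pmax L h delta (rk h delta)).
Proof.
  intros Hs2 _ HL Hh0 Hinc Hdelta Hsum Hden Hr.
  assert (Hs : (1 <= s)%nat) by lia.
  split; [|split; [|split]].
  - apply rk_KKT; assumption.
  - apply KKT_unique; assumption.
  - apply rk_feasible; assumption.
  - apply rk_optimal; assumption.
Qed.
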